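(* Let $d\ge2$ and $a\in\mathbb{Z}_n^*$. Then: (1) if $a\ne1$, then $|\mathrm{Fix}(a,\mathcal{Y}_{\mathrm{gen}})|\le n^{d-1}$; (2) if $a^2\ne1$, then $|\mathrm{Fix}(a,\mathcal{Y}_{\mathrm{gen}})|\le n^{d-2}$.
   Context: $\mathcal{Y}_{\mathrm{gen}}$ is the set of $d$-element subsets of $\mathbb{Z}_n$ that generate $\mathbb{Z}_n$. The unit group $\mathbb{Z}_n^*$ acts on it by $A\mapsto aA=\{ax:x\in A\}$, and $\mathrm{Fix}(a,\mathcal{Y}_{\mathrm{gen}})=\{A\in\mathcal{Y}_{\mathrm{gen}}:aA=A\}$. *)

From HB Require Import structures.
From mathcomp Require Import all_boot all_order all_algebra all_fingroup.
Set Implicit Arguments. Unset Strict Implicit. Unset Printing Implicit Defensive.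
Import GRing.Theory.

Definition scale_set (n : nat) (a : 'Z_n) (A : {set 'Z_n}) : {set 'Z_n} :=
  [set (a * x)%R | x in A].

Definition Ygen (n d : nat) : {set {set 'Z_n}} :=
  [set A : {set 'Z_n} | (#|A| == d) && (<<A>>%g == [set: 'Z_n])].

Definition FixYgen (n d : nat) (a : 'Z_n) : {set {set 'Z_n}} :=
  [set A in Ygen n d | scale_set a A == A].

From HB Require Import structures.
From mathcomp Require Import all_boot all_order all_algebra all_fingroup.
From mathcomp Require Import zify.
Set Implicit Arguments. Unset Strict Implicit. Unset Printing Implicit Defensive.
Import GRing.Theory.

(* A generating set A fixed by a is a union of <a>-orbits, and A contains an
   orbit of length k as soon as some element of A is moved by a, resp. a^2
   (otherwise a, resp. a^2, fixes the generators, hence all of Z_n, hence 1).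
   Such an A is determined by one point of the orbit together with the
   remaining d - k elements, which gives at most n^(d - k + 1) choices. *)

Local Open Scope ring_scope.

Lemma fixed_generators_eq1 (n : nat) (b : 'Z_n) (A : {set 'Z_n}) :
  <<A>>%g = [set: 'Z_n] -> {in A, forall x, b * x = x} -> b = 1.
Proof.
move=> genA bA.
have fixG : group_set [set x : 'Z_n | b * x == x].
  apply/group_setP; split=> [|x y]; first by rewrite inE mulr0.
  rewrite !inE => /eqP bx /eqP by_.
  by change (b * (x + y) == x + y); rewrite mulrDr bx by_.
have : <<A>>%g \subset Group fixG.
  by rewrite gen_subG; apply/subsetP => x xA; rewrite inE bA.
by rewrite genA => /subsetP/(_ 1 (in_setT _)); rewrite inE mulr1 => /eqP.
Qed.

Lemma exists_moved_generator (n : nat) (b : 'Z_n) (A : {set 'Z_n}) :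
  <<A>>%g = [set: 'Z_n] -> b != 1 -> exists2 x, x \in A & b * x != x.
Proof.
move=> genA b_neq1; apply/exists_inP; apply: contraR b_neq1.
rewrite negb_exists_in => /forall_inP fixA; apply/eqP.
by apply: fixed_generators_eq1 genA _ => x /fixA/negPn/eqP.
Qed.

Section PowerOrbit.

Variables (R : finComUnitRingType) (a : R).

Definition power_orbit (x : R) (k : nat) : {set R} := [set a ^+ i * x | i : 'I_k].

Lemma power_orbit_sub (A : {set R}) x k :
  {in A, forall y, a * y \in A} -> x \in A -> power_orbit x k \subset A.
Proof.
move=> invA xA; apply/subsetP => _ /imsetP[i _ ->].
elim: (nat_of_ord i) => [|j IHj]; first by rewrite mul1r.
by rewrite exprS -mulrA invA.
Qed.

Lemma card_power_orbit x k : a \is a GRing.unit ->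
  (forall i, (0 < i < k)%N -> a ^+ i * x != x) -> #|power_orbit x k| = k.
Proof.
move=> ua moved; rewrite card_imset ?card_ord //.
move=> i j; wlog le_ij : i j / (i <= j)%N => [sym eqij|eqij].
  by have [/sym->|/ltnW/sym->] := leqP i j.
apply/val_inj/eqP; rewrite /= eqn_leq le_ij /=.
rewrite leqNgt; apply/negP => lt_ij.
have /moved/negP[] : (0 < j - i < k)%N.
  by rewrite subn_gt0 lt_ij (leq_ltn_trans (leq_subr _ _)).
apply/eqP/(mulrI (unitrX i ua)).
by rewrite mulrA -exprD subnKC ?(ltnW lt_ij).
Qed.

End PowerOrbit.

Lemma card_sets_with_orbit_le (T : finType) (F : {set {set T}})
    (orb : T -> {set T}) (d m : nat) :
  {in F, forall A : {set T}, #|A| = d} ->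
  {in F, forall A : {set T}, exists2 x, orb x \subset A & #|orb x| = m} ->
  (#|F| <= #|T| ^ (d.+1 - m))%N.
Proof.
move=> cardF orbF.
have [->|[A0 A0F]] := set_0Vmem F; first by rewrite cards0.
have [x0 _ _] := orbF A0 A0F.
pose base (A : {set T}) := odflt x0 [pick x | (orb x \subset A) && (#|orb x| == m)].
have baseP A : A \in F -> orb (base A) \subset A /\ #|orb (base A)| = m.
  move=> AF; rewrite /base; case: pickP => [x /andP[? /eqP]|noorb] //=.
  by have [x sx cx] := orbF A AF; move: (noorb x); rewrite sx cx eqxx.
pose code (A : {set T}) := base A :: enum (A :\: orb (base A)).
have size_code A : A \in F -> size (code A) = (d.+1 - m)%N.
  move=> AF; have [sA cA] := baseP A AF.
  have := subset_leq_card sA; rewrite /= -cardE cardsD (setIidPr sA) cA cardF //.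
  by move=> le_md; rewrite subSn.
have decode A : A \in F -> A = orb (head x0 (code A)) :|: [set x in behead (code A)].
  move=> AF; have [sA _] := baseP A AF; rewrite /= set_enum.
  by rewrite -{1}(setID A (orb (base A))) (setIidPr sA).
pose tcode (A : {set T}) : (d.+1 - m).-tuple T := insubd [tuple of nseq _ x0] (code A).
have tcode_inj : {in F &, injective tcode}.
  move=> A B AF BF /(congr1 val); rewrite !val_insubd !size_code // eqxx => eqc.
  by rewrite (decode A AF) (decode B BF) eqc.
by rewrite -(card_in_imset tcode_inj) -card_tuple max_card.
Qed.

Lemma card_FixYgen_le (n d k : nat) (a : 'Z_n) :
  (1 < n)%N -> a \is a GRing.unit ->
  {in FixYgen d a, forall A : {set 'Z_n}, exists2 x, x \in A &
     forall i, (0 < i < k)%N -> a ^+ i * x != x} ->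
  (#|FixYgen d a| <= n ^ (d.+1 - k))%N.
Proof.
move=> n_gt1 ua orbA.
have card_Zn : #|'Z_n| = n by rewrite card_ord Zp_cast.
rewrite -[X in (_ <= X ^ _)%N]card_Zn.
apply: (@card_sets_with_orbit_le _ _ (fun x => power_orbit a x k)).
  by move=> A; rewrite !inE => /andP[/andP[/eqP]].
move=> A AF; have [x xA moved] := orbA A AF; exists x; last exact: card_power_orbit.
move: AF; rewrite !inE => /andP[_ /eqP fixA].
by apply: power_orbit_sub xA => y yA; rewrite -fixA imset_f.
Qed.

Theorem lemma5p3 (n d : nat) (a : 'Z_n) :
  (1 < n)%N -> (2 <= d)%N -> a \is a GRing.unit ->
  (a != 1%R -> (#|FixYgen d a| <= n ^ d.-1)%N) /\
  ((a * a)%R != 1%R -> (#|FixYgen d a| <= n ^ (d - 2))%N).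
Proof.
move=> n_gt1 d_ge2 ua.
have genF A : A \in FixYgen d a -> <<A>>%g = [set: 'Z_n].
  by rewrite !inE => /andP[/andP[_ /eqP]].
split=> [a_neq1 | a2_neq1].
- rewrite (_ : d.-1 = d.+1 - 2)%N; last by lia.
  apply: card_FixYgen_le => // A /genF genA.
  have [x xA ax] := exists_moved_generator genA a_neq1.
  by exists x => // i /andP[i_gt0 i_lt2]; rewrite (_ : i = 1)%N ?expr1 //; lia.
- rewrite (_ : d - 2 = d.+1 - 3)%N; last by lia.
  apply: card_FixYgen_le => // A /genF genA.
  have [x xA a2x] := exists_moved_generator genA a2_neq1.
  have ax : a * x != x by apply: contra a2x => /eqP ax; rewrite -mulrA ax ax.
  exists x => // i /andP[i_gt0 i_lt3].
  by have [->|->] : i = 1%N \/ i = 2%N by lia; rewrite ?expr1 ?expr2 -?mulrA.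
Qed.
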